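(* Let $n\geqslant 3$, $\mathbf{y}\in\mathbb{N}^n$ (positive integers), $1\leqslant r\leqslant n-1$ and $X\geqslant 1$. Then $$\#\mathcal{A}_r(\mathbf{y},X)=2^{n-r}\prod_{j=r+1}^n\frac{X}{d_1^{(j-1)}}+O\left(X^{n-r-1}\right),$$ with an implied constant independent of $\mathbf{y}$ and $X$.
   Context: Let $N=2^n-1$; for $h\in\{1,\dots,N\}$ write $h=\sum_{j=1}^n\varepsilon_j(h)2^{j-1}$, $\varepsilon_j(h)\in\{0,1\}$; $h\preceq\ell$ means $\varepsilon_j(h)\leqslant\varepsilon_j(\ell)$ for all $j$. There is a unique $N$-tuple $(z_h)$ of positive integers which is reduced (i.e. $\gcd(z_h,z_\ell)=1$ whenever $h,\ell$ are incomparable for $\preceq$) with $y_j=\prod_h z_h^{\varepsilon_j(h)}$ for all $j$; fix it. Put $d_i=\prod_{h}z_h^{1-\varepsilon_i(h)}$ for $1\leqslant i\leqslant n$; $d_{1,r}=\prod_{h:\ \varepsilon_1(h)=\cdots=\varepsilon_r(h)=0}z_h$ for $1\leqslant r\leqslant n$ (so $d_{1,1}=d_1$); and for $2\leqslant r\leqslant n$, $d_1^{(r-1)}=\prod_{h:\ \varepsilon_1(h)=\cdots=\varepsilon_{r-1}(h)=0,\ \varepsilon_r(h)=1}z_h$. Finally $$\mathcal{A}_r(\mathbf{y},X)=\Big\{(\alpha_{r+1},\dots,\alpha_n)\in\mathbb{Z}^{n-r}:\ \max_{r+1\leqslant i\leqslant n}|\alpha_i|\leqslant X,\ \sum_{i=r+1}^n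 d_i\alpha_i\equiv 0 \pmod{d_{1,r}}\Big\}.$$ *)

From HB Require Import structures.
From mathcomp Require Import all_boot all_order all_algebra.
From mathcomp Require Import reals.
Set Implicit Arguments. Unset Strict Implicit. Unset Printing Implicit Defensive.
Import Order.TTheory GRing.Theory Num.Theory.

(* eps j h = epsilon_j(h), the (j-1)-th binary digit of h (j is 1-indexed). *)
Definition eps (j h : nat) : bool := odd (h %/ 2 ^ j.-1).

Definition prec (n h l : nat) : bool := [forall j : 'I_n, eps j.+1 h <= eps j.+1 l].

Definition reduced (n : nat) (z : nat -> nat) : Prop :=
  forall h l, 1 <= h < 2 ^ n -> 1 <= l < 2 ^ n ->
    ~~ prec n h l -> ~~ prec n l h -> coprime (z h) (z l).

Definition factors (n : nat) (y z : nat -> nat) : Prop :=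
  forall j, 1 <= j <= n -> y j = \prod_(1 <= h < 2 ^ n) z h ^ eps j h.

Definition dd (n : nat) (z : nat -> nat) (i : nat) : nat :=
  \prod_(1 <= h < 2 ^ n) z h ^ (1 - eps i h).

Definition d1r (n : nat) (z : nat -> nat) (r : nat) : nat :=
  \prod_(1 <= h < 2 ^ n | [forall j : 'I_r, ~~ eps j.+1 h]) z h.

Definition d1sup (n : nat) (z : nat -> nat) (m : nat) : nat :=
  \prod_(1 <= h < 2 ^ n | [forall j : 'I_m, ~~ eps j.+1 h] && eps m.+1 h) z h.

(* #A_r(y, X): tuples (alpha_{r+1},...,alpha_n) in Z^{n-r}, alpha_{r+1+k} = alpha k,
   with max |alpha_i| <= X and sum_i d_i alpha_i = 0 mod d_{1,r}.
   They are enumerated inside the box [-B, B]^{n-r}, B = floor X, which contains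
   every integer alpha with |alpha| <= X; the condition |alpha_i| <= X is still
   imposed literally. *)
Definition countA (R : realType) (n : nat) (z : nat -> nat) (r : nat) (X : R) : nat :=
  let B := Num.truncn X in
  #|[set a : {ffun 'I_(n - r) -> 'I_(2 * B + 1)} |
      [forall k, ((`|(a k)%:Z - B%:Z|%R)%:~R <= X)%R] &&
      ((d1r n z r)%:Z %| (\sum_(k < n - r)
          ((dd n z (r + 1 + k))%:Z * ((a k)%:Z - B%:Z)))%R)%Z]|.

From HB Require Import structures.
From mathcomp Require Import all_boot all_order all_algebra.
From mathcomp Require Import reals.
From mathcomp Require Import zify ring lra.
Import Order.TTheory GRing.Theory Num.Theory.
Set Implicit Arguments. Unset Strict Implicit. Unset Printing Implicit Defensive.

(* In one variable, the
   congruence w + a x = 0 (mod D) has no solution if gcd(a, D) does not divide w,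
   and otherwise its solutions form one residue class modulo D / gcd(a, D), so
   that 2X gcd(a, D) / D + O(1) of them lie in the box.  Summing over the last
   coordinate and inducting on the dimension k, the count is
   [g | t] g (2X)^k / D + O(5^k X^(k-1)) where g = gcd(D, d_{r+1}, ..., d_n).
   Reducedness forces g = 1: a prime p dividing d_{1,r} and all d_i, i > r,
   divides some z_h with eps_1(h) = ... = eps_r(h) = 0; a digit j > r of h is 1,
   and p | d_j yields h' with eps_j(h') = 0 and p | z_h', so that h' and h are
   comparable, i.e. h' < h strictly, and we descend forever.  Finally
   d_{1,r} = prod_(r < j <= n) d_1^(j-1). *)

Definition low_zero (r h : nat) : bool := [forall j : 'I_r, ~~ eps j.+1 h].

Definition popcount (n h : nat) : nat := \sum_(j < n) eps j.+1 h.

Lemma low_zero_eq0 n h : h < 2 ^ n -> low_zero n h -> h = 0.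
Proof.
elim: n h => [|n IH] h; first by rewrite expn0 ltnS leqn0 => /eqP.
move=> h_lt /forallP h0.
have h_even : ~~ odd h by have := h0 ord0; rewrite /eps /= expn0 divn1.
suff h_half : h %/ 2 = 0 by rewrite (divn_eq h 2) h_half modn2 (negbTE h_even).
apply: IH; first by rewrite ltn_divLR // -expnSr.
by apply/forallP => j; have := h0 (lift ord0 j); rewrite /eps /= -divnMA -expnS.
Qed.

Lemma exists_eps n h : 0 < h < 2 ^ n -> exists j : 'I_n, eps j.+1 h.
Proof.
case/andP=> h_gt0 h_lt; apply/existsP; apply: contraTT h_gt0.
by rewrite negb_exists => /(low_zero_eq0 h_lt) ->.
Qed.

Lemma low_zeroS m h : low_zero m.+1 h = low_zero m h && ~~ eps m.+1 h.
Proof.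
apply/forallP/andP => [H|[/forallP H1 H2] j].
  by split; [apply/forallP => j; exact: (H (widen_ord (leqnSn m) j)) | exact: (H ord_max)].
have := ltn_ord j; rewrite ltnS leq_eqVlt => /orP[/eqP -> //|jm].
exact: (H1 (Ordinal jm)).
Qed.

Lemma d1rS n z m : d1r n z m = d1sup n z m * d1r n z m.+1.
Proof.
rewrite /d1r /d1sup (bigID (fun h => eps m.+1 h)) /=; congr (_ * _).
by apply: eq_bigl => h; rewrite -low_zeroS.
Qed.

Lemma d1r_all n z : d1r n z n = 1.
Proof.
rewrite /d1r big_nat_cond big1 // => h /andP[h_range /forallP h0].
by have [j hj] := exists_eps h_range; move: (h0 j); rewrite hj.
Qed.

Lemma d1r_prod_d1sup n z r : r <= n ->
  d1r n z r = \prod_(r.+1 <= j < n.+1) d1sup n z j.-1.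
Proof.
move=> /subnK; move: (n - r) => k; elim: k r => [|k IH] r n_eq.
  by rewrite add0n in n_eq; rewrite n_eq big_geq // d1r_all.
rewrite big_ltn; last lia.
by rewrite d1rS (IH r.+1) // addnS.
Qed.

Section NoCommonPrime.
Variables (n : nat) (z : nat -> nat) (r p : nat).
Hypotheses (p_prime : prime p) (z_red : reduced n z) (r_le_n : r <= n).
Hypothesis p_dvd_dd : forall i, r < i <= n -> p %| dd n z i.

Lemma low_zero_descent h : 0 < h < 2 ^ n -> low_zero r h -> p %| z h ->
  exists2 h', [&& 0 < h' < 2 ^ n, low_zero r h' & p %| z h']
            & popcount n h' < popcount n h.
Proof.
move=> h_range h_low p_zh; have [j hj] := exists_eps h_range.
have r_lt_j : r < j.+1.
  rewrite ltnNge; apply: contraL hj => j_lt_r.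
  exact: (forallP h_low (Ordinal j_lt_r)).
have := @p_dvd_dd j.+1; rewrite r_lt_j ltn_ord => /(_ isT).
rewrite /dd Euclid_dvd_prod // big_has => /hasP[h'].
rewrite mem_index_iota => h'_range p_dvd.
have eps_h' : ~~ eps j.+1 h'.
  by apply: contraL p_dvd => ->; rewrite subnn expn0 dvdn1 gtn_eqF ?prime_gt1.
rewrite (negbTE eps_h') subn0 expn1 in p_dvd.
have h'_le_h : prec n h' h.
  have comparable : prec n h h' || prec n h' h.
    apply: contraT; rewrite negb_or => /andP[nhh' nh'h].
    have := coprime_dvdl p_zh (z_red h_range h'_range nhh' nh'h).
    by rewrite prime_coprime // p_dvd.
  by case/orP: comparable => // /forallP /(_ j); rewrite hj (negbTE eps_h').
exists h'; first (apply/and3P; split => //).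
  apply/forallP => i; have := forallP h'_le_h (widen_ord r_le_n i).
  by have := forallP h_low i; rewrite /=; case: (eps _ h'); case: (eps _ h).
rewrite /popcount (bigD1 j) //= [X in _ < X](bigD1 j) //= hj (negbTE eps_h').
by rewrite add0n add1n ltnS; apply: leq_sum => i _; exact: (forallP h'_le_h i).
Qed.

Lemma prime_ndvd_d1r : ~~ (p %| d1r n z r).
Proof.
apply/negP; rewrite /d1r Euclid_dvd_prod // big_has_cond => /hasP[h].
rewrite mem_index_iota => h_range /andP[h_low p_zh].
suff no_witness : forall w h, popcount n h = w ->
  0 < h < 2 ^ n -> low_zero r h -> p %| z h -> False by exact: no_witness h_range h_low p_zh.
elim/ltn_ind => w IH {}h h_w {}h_range {}h_low {}p_zh.
have [h' /and3P[h'_range h'_low p_zh']] := low_zero_descent h_range h_low p_zh.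
by rewrite h_w => /IH /(_ h' erefl); apply.
Qed.

End NoCommonPrime.

Lemma coprime_dd_d1r n z r : reduced n z -> r <= n -> 0 < d1r n z r ->
  coprime (\big[gcdn/0]_(i < n - r) dd n z (r + 1 + i)) (d1r n z r).
Proof.
move=> z_red r_le_n D_gt0; rewrite /coprime; set g := gcdn _ _.
have g_gt0 : 0 < g by rewrite gcdn_gt0 D_gt0 orbT.
rewrite eqn_leq g_gt0 andbT leqNgt; apply/negP => g_gt1.
have p_g := pdiv_dvd g.
have p_dvd_dd : forall i, r < i <= n -> pdiv g %| dd n z i.
  move=> i /andP[r_lt_i i_le_n]; apply: dvdn_trans p_g (dvdn_trans (dvdn_gcdl _ _) _).
  have i_lt : i - r - 1 < n - r by lia.
  have -> : i = r + 1 + Ordinal i_lt by rewrite /=; lia.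
  exact: (biggcdn_inf (Ordinal i_lt)).
have := prime_ndvd_d1r (pdiv_prime g_gt1) z_red r_le_n p_dvd_dd.
by rewrite (dvdn_trans p_g (dvdn_gcdr _ _)).
Qed.

Definition ffun_snoc (T : finType) k (g : {ffun 'I_k -> T}) (x : T) : {ffun 'I_k.+1 -> T} :=
  [ffun i => if unlift ord_max i is Some j then g j else x].

Lemma ffun_snoc_lift (T : finType) k (g : {ffun 'I_k -> T}) x j :
  ffun_snoc g x (lift ord_max j) = g j.
Proof. by rewrite ffunE liftK. Qed.

Lemma ffun_snoc_max (T : finType) k (g : {ffun 'I_k -> T}) x : ffun_snoc g x ord_max = x.
Proof. by rewrite ffunE unlift_none. Qed.

Lemma ffun_snoc_widen (T : finType) k (g : {ffun 'I_k -> T}) x j :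
  ffun_snoc g x (widen_ord (leqnSn k) j) = g j.
Proof.
by rewrite -(ffun_snoc_lift g x); congr (ffun_snoc g x _); apply/val_inj/esym/lift_max.
Qed.

Lemma big_ffunS (R : Type) (idx : R) (op : Monoid.com_law idx) (T : finType) k
    (F : {ffun 'I_k.+1 -> T} -> R) :
  \big[op/idx]_f F f = \big[op/idx]_(g : {ffun 'I_k -> T}) \big[op/idx]_(x : T) F (ffun_snoc g x).
Proof.
rewrite pair_big (reindex (fun gx => ffun_snoc gx.1 gx.2)) //=.
exists (fun f => ([ffun j => f (lift ord_max j)], f ord_max)) => [[g x] _ | f _] /=.
  by rewrite ffun_snoc_max; congr pair; apply/ffunP => j; rewrite ffunE ffun_snoc_lift.
by apply/ffunP => i; rewrite ffunE; case: unliftP => [j ->|->] //; rewrite ffunE.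
Qed.

Lemma sum_residue_mul m y0 q : y0 < m -> \sum_(0 <= x < q * m) (x %% m == y0 : nat) = q.
Proof.
move=> y0_lt; elim: q => [|q IH]; first by rewrite big_geq.
rewrite mulSn addnC (big_cat_nat (n := q * m)) ?leq_addr //= IH.
rewrite -{1}(add0n (q * m)) big_addn addKn big_mkord.
rewrite (eq_bigr (fun i : 'I_m => (i == y0 :> nat : nat))) => [|i _]; last first.
  by rewrite addnC modnMDl modn_small.
rewrite (bigD1 (Ordinal y0_lt)) //= eqxx big1 ?addn0 ?addn1 //.
by move=> i /negbTE; rewrite -val_eqE /= => ->.
Qed.

Lemma sum_residue_bounds m y0 N : y0 < m ->
  N %/ m <= \sum_(0 <= x < N) (x %% m == y0 : nat) <= (N %/ m).+1.
Proof.
move=> y0_lt; have m_gt0 : 0 < m by apply: leq_ltn_trans y0_lt.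
have mono N1 N2 : N1 <= N2 ->
    \sum_(0 <= x < N1) (x %% m == y0 : nat) <= \sum_(0 <= x < N2) (x %% m == y0 : nat).
  by move=> le_N; rewrite [X in _ <= X](big_cat_nat (n := N1)) //= leq_addr.
apply/andP; split.
  by rewrite -{1}(sum_residue_mul (N %/ m) y0_lt) mono ?leq_divM.
by rewrite -{1}(sum_residue_mul (N %/ m).+1 y0_lt) mono // ltnW ?ltn_ceil.
Qed.

Local Open Scope ring_scope.

Lemma dvdz_lin_congr (D a : nat) (w : int) : (0 < D)%N -> ((gcdn a D)%:Z %| w)%Z ->
  exists x0 : int, forall x : int,
    (D%:Z %| w + a%:Z * x)%Z = (x == x0 %[mod (D %/ gcdn a D)%N])%Z.
Proof.
move=> D_gt0 e_w; set e := gcdn a D in e_w *; set m := (D %/ e)%N; set a' := (a %/ e)%N.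
have e_gt0 : (0 < e)%N by rewrite gcdn_gt0 D_gt0 orbT.
have e_nz : e%:Z != 0 by rewrite eqz_nat -lt0n.
have D_eq : D = (m * e)%N by rewrite divnK // dvdn_gcdr.
have a_eq : a = (a' * e)%N by rewrite divnK // dvdn_gcdl.
have [w' ->] := dvdzP e_w.
have [u [v uv]] := Bezoutz a D.
have uv' : u * a'%:Z + v * m%:Z = 1.
  move: uv; rewrite /gcdz /= -/e {1}a_eq {1}D_eq !PoszM => uv.
  by apply: (mulIf e_nz); rewrite mul1r -[in RHS]uv; ring.
have m_u : coprimez m%:Z u by apply/coprimezP; exists (v, a'%:Z); rewrite /= -uv'; ring.
(* [u] inverts [a'] modulo [m], so the congruence is solved by multiplying by [u]. *)
exists (- (u * w')) => x.
rewrite eqz_mod_dvd {1}D_eq {1}a_eq !PoszM.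
have -> : w' * e%:Z + a'%:Z * e%:Z * x = (w' + a'%:Z * x) * e%:Z by ring.
rewrite dvdz_mul2r // -(Gauss_dvdzr _ m_u).
have -> : u * (w' + a'%:Z * x) = (x - - (u * w')) + (- (v * x)) * m%:Z.
  apply/eqP; rewrite -subr_eq0.
  have -> : u * (w' + a'%:Z * x) - (x - - (u * w') + - (v * x) * m%:Z)
            = x * (u * a'%:Z + v * m%:Z - 1) by ring.
  by rewrite uv' subrr mulr0.
by rewrite rpredDr // dvdz_mull.
Qed.

Section BoxCount.
Variable B : nat.

Definition centre (x : nat) : int := x%:Z - B%:Z.

Definition linform k (c : nat -> nat) (f : {ffun 'I_k -> 'I_(2 * B + 1)}) : int :=
  \sum_(i < k) (c i)%:Z * centre (f i).

Definition ncong1 (D a : nat) (w : int) : nat :=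
  (\sum_(x < 2 * B + 1) (D%:Z %| (w + a%:Z * centre x)%R)%Z)%N.

Definition ncong k (c : nat -> nat) (D : nat) (t : int) : nat :=
  (\sum_(f : {ffun 'I_k -> 'I_(2 * B + 1)}) (D%:Z %| (t + linform c f)%R)%Z)%N.

Lemma ncong1_residue D a w : (0 < D)%N -> ((gcdn a D)%:Z %| w)%Z ->
  exists2 y0, (y0 < D %/ gcdn a D)%N &
    ncong1 D a w = (\sum_(0 <= x < 2 * B + 1) (x %% (D %/ gcdn a D) == y0 : nat))%N.
Proof.
move=> D_gt0 e_w; have [x0 Hx0] := dvdz_lin_congr D_gt0 e_w.
set m := (D %/ gcdn a D)%N in Hx0 *.
have m_gt0 : (0 < m)%N.
  by rewrite divn_gt0 ?gcdn_gt0 ?D_gt0 ?orbT // dvdn_leq // dvdn_gcdr.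
exists (absz ((x0 + B%:Z) %% m%:Z)%Z).
  by rewrite -ltz_nat gez0_abs ?modz_ge0 ?ltz_pmod // ?ltz_nat // eqz_nat -lt0n.
rewrite big_mkord; apply: eq_bigr => x _; rewrite Hx0 /centre.
rewrite -(eqz_modDr B%:Z) subrK -eqz_nat -modz_nat.
by rewrite gez0_abs ?modz_ge0 // eqz_nat -lt0n.
Qed.

Lemma ncong1_eq0 D a w : ~~ ((gcdn a D)%:Z %| w)%Z -> ncong1 D a w = 0%N.
Proof.
move=> e_ndvd; rewrite /ncong1 big1 // => x _; apply/eqP; rewrite eqb0.
apply: contra e_ndvd => D_dvd; rewrite -(addrK (a%:Z * centre x) w).
apply: rpredB; first by apply: dvdz_trans D_dvd; apply: dvdn_gcdr.
by apply: dvdz_mulr; apply: dvdn_gcdl.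
Qed.

Lemma ncong1_approx (R : realFieldType) (X : R) D a w :
  (0 < D)%N -> B%:R <= X -> X < B.+1%:R ->
  `|(ncong1 D a w)%:R - (((gcdn a D)%:Z %| w)%Z : nat)%:R * (2 * X * (gcdn a D)%:R / D%:R)|
    <= 2.
Proof.
move=> D_gt0 B_le_X X_lt_B1.
have [e_w|e_ndvd] := boolP ((gcdn a D)%:Z %| w)%Z; last first.
  by rewrite ncong1_eq0 // mul0r subr0 normr0.
have [y0 y0_lt ->] := ncong1_residue D_gt0 e_w; rewrite mul1r.
set e := gcdn a D in y0_lt *; set m := (D %/ e)%N in y0_lt *; set N := (2 * B + 1)%N.
have /andP[q_le_L L_le_q1] := sum_residue_bounds N y0_lt.
set L := (\sum_(0 <= x < N) _)%N in q_le_L L_le_q1 *.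
have e_gt0 : (0 < e)%N by rewrite gcdn_gt0 D_gt0 orbT.
have D_eq : D = (m * e)%N by rewrite divnK // dvdn_gcdr.
have m_gt0 : (0 < m)%N by apply: leq_ltn_trans y0_lt.
clearbody L m e.
have Lm_le : L%:R * m%:R <= N%:R + m%:R :> R.
  by rewrite -natrM -natrD ler_nat; have := leq_divM N m; nia.
have Lm_gt : N%:R < L%:R * m%:R + m%:R :> R.
  by rewrite -natrM -natrD ltr_nat; have := ltn_ceil N m_gt0; nia.
rewrite /N natrD natrM in Lm_le Lm_gt.
have m_pos : 0 < (m%:R : R) by rewrite ltr0n.
have -> : L%:R - 2 * X * e%:R / D%:R = (L%:R * m%:R - 2 * X) / m%:R.
  by rewrite D_eq natrM; field; rewrite (gt_eqF m_pos) pnatr_eq0 -lt0n e_gt0.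
rewrite normrM normfV (gtr0_norm m_pos) ler_pdivrMr // ler_norml.
move: X_lt_B1; rewrite -addn1 natrD => X_lt_B1.
have m_ge1 : 1 <= m%:R :> R by rewrite ler1n.
by apply/andP; split; lra.
Qed.

Lemma ncong0 c D t : ncong 0 c D t = (D%:Z %| t)%Z.
Proof.
rewrite /ncong (eq_bigr (fun _ => ((D%:Z %| t)%Z : nat))) => [|f _].
  by rewrite sum_nat_const card_ffun !card_ord expn0 mul1n.
by rewrite /linform big_ord0 addr0.
Qed.

Lemma ncongS k c D t :
  ncong k.+1 c D t =
    (\sum_(g : {ffun 'I_k -> 'I_(2 * B + 1)}) ncong1 D (c k) (t + linform c g))%N.
Proof.
rewrite /ncong big_ffunS; apply: eq_bigr => g _; apply: eq_bigr => x _.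
rewrite /linform big_ord_recr /= ffun_snoc_max addrA.
by under eq_bigr => i _ do rewrite ffun_snoc_widen.
Qed.

Lemma ncongS_approx (R : realFieldType) (X : R) k c D t :
  (0 < D)%N -> B%:R <= X -> X < B.+1%:R ->
  `|(ncong k.+1 c D t)%:R
    - 2 * X * (gcdn (c k) D)%:R / D%:R * (ncong k c (gcdn (c k) D) t)%:R|
    <= 2 * ((2 * B + 1) ^ k)%:R.
Proof.
move=> D_gt0 B_le_X X_lt_B1.
rewrite ncongS /ncong !natr_sum mulr_sumr -sumrB.
apply: le_trans (ler_norm_sum _ _ _) _.
apply: le_trans (@ler_sum _ _ _ _ _ (fun=> 2) _) _ => [g _|]; first by rewrite mulrC ncong1_approx.
by rewrite sumr_const card_ffun !card_ord mulr_natr.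
Qed.

Lemma ncong_approx (R : realFieldType) (X : R) k (c : nat -> nat) D t :
  (0 < D)%N -> 1 <= X -> B%:R <= X -> X < B.+1%:R ->
  let g := gcdn (\big[gcdn/0%N]_(i < k) c i) D in
  `|(ncong k c D t)%:R - ((g%:Z %| t)%Z : nat)%:R * g%:R * (2 * X) ^+ k / D%:R|
    <= 5%:R ^+ k * X ^+ k / X.
Proof.
move=> + X_ge1 B_le_X X_lt_B1; elim: k => [|k IH] in D *.
  move=> D_gt0 /=; rewrite big_ord0 gcd0n ncong0 expr0 mulr1 mulfK ?pnatr_eq0 -?lt0n //.
  by rewrite subrr normr0 expr0 !mul1r invr_ge0; lra.
move=> D_gt0 /=; rewrite big_ord_recr /= -gcdnA.
set e := gcdn (c k) D; set g := gcdn _ e; set rho := 2 * X * e%:R / D%:R.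
have e_gt0 : (0 < e)%N by rewrite gcdn_gt0 D_gt0 orbT.
have := IH e e_gt0; rewrite /= -/g; set Mk := _ * _ * _ / _ => IHe.
have X_gt0 : 0 < X by lra.
have -> : ((g%:Z %| t)%Z : nat)%:R * g%:R * (2 * X) ^+ k.+1 / D%:R = rho * Mk.
  by rewrite /rho /Mk exprS; field; rewrite !pnatr_eq0 -!lt0n e_gt0 D_gt0.
have rho_ge0 : 0 <= rho by rewrite /rho !mulr_ge0 ?invr_ge0 ?ler0n //; lra.
have rho_le : rho <= 2 * X.
  rewrite /rho -mulrA ler_piMr ?mulr_ge0 //; try lra.
  by rewrite ler_pdivrMr ?ltr0n // mul1r ler_nat dvdn_leq // dvdn_gcdr.
have box_le : ((2 * B + 1) ^ k)%:R <= 5%:R ^+ k * X ^+ k :> R.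
  rewrite natrX -exprMn lerXn2r ?nnegrE ?ler0n ?mulr_ge0 //; try lra.
set P := 5%:R ^+ k * X ^+ k in box_le IHe *.
have -> : 5%:R ^+ k.+1 * X ^+ k.+1 / X = 2 * P + 2 * X * (P / X) + P.
  by rewrite /P !exprS; field; lra.
rewrite -[_ - rho * Mk](subrKA (rho * (ncong k c e t)%:R)) -mulrBr.
apply: le_trans (ler_normD _ _) _; rewrite normrM (ger0_norm rho_ge0).
have := ncongS_approx k c t D_gt0 B_le_X X_lt_B1; rewrite -/e -/rho => approxS.
have := ler_pM rho_ge0 (normr_ge0 _) rho_le IHe.
have : 0 <= P by rewrite /P mulr_ge0 ?exprn_ge0 //; lra.
lra.
Qed.
End BoxCount.

Lemma countA_ncong (R : realType) n z r (X : R) : 0 <= X ->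
  countA n z r X =
    ncong (Num.truncn X) (n - r) (fun i => dd n z (r + 1 + i)) (d1r n z r) 0.
Proof.
move=> X_ge0; have /andP[B_le_X _] := truncn_itv X_ge0.
rewrite /countA /ncong -sum1_card big_mkcond /=; apply: eq_bigr => f _.
rewrite inE add0r; set B := Num.truncn X in B_le_X *.
suff -> : [forall k, (`|(f k)%:Z - B%:Z|%:~R <= X)] by [].
apply/forallP => k; apply: le_trans B_le_X.
have : `|(f k)%:Z - B%:Z| <= B%:Z by rewrite ler_norml; have := ltn_ord (f k); lia.
by rewrite -(ler_int R).
Qed.

Theorem mainTheorem3 (R : realType) (n : nat) (hn : (3 <= n)%N) (r : nat)
    (hr : (1 <= r <= n - 1)%N) :
  exists C : R, forall (y z : nat -> nat) (X : R),
    (forall j, (1 <= j <= n)%N -> (0 < y j)%N) ->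
    (forall h, (1 <= h < 2 ^ n)%N -> (0 < z h)%N) ->
    reduced n z -> factors n y z ->
    1 <= X ->
    `| (countA n z r X)%:R
       - 2 ^+ (n - r) * \prod_(r.+1 <= j < n.+1) (X / (d1sup n z j.-1)%:R) |
      <= C * X ^+ (n - r - 1).
Proof.
exists (5%:R ^+ (n - r)) => y z X _ z_gt0 z_red _ X_ge1.
have r_le_n : (r <= n)%N by lia.
have D_gt0 : (0 < d1r n z r)%N.
  by rewrite /d1r big_nat_cond prodn_cond_gt0 // => h /andP[/z_gt0].
have /andP[B_le_X X_lt_B1] := truncn_itv (le_trans ler01 X_ge1).
have := ncong_approx (n - r) (fun i => dd n z (r + 1 + i)) 0 D_gt0 X_ge1 B_le_X X_lt_B1.
rewrite /= (eqP (coprime_dd_d1r z_red r_le_n D_gt0)) dvd1z mul1r -countA_ncong; last lra.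
have -> : 2 ^+ (n - r) * \prod_(r.+1 <= j < n.+1) (X / (d1sup n z j.-1)%:R)
    = (2 * X) ^+ (n - r) / (d1r n z r)%:R.
  rewrite big_split /= prodr_const_nat subSS prodfV -natr_prod -d1r_prod_d1sup //.
  by rewrite exprMn mulrA.
have -> : X ^+ (n - r) = X * X ^+ (n - r - 1) by rewrite -exprS; congr (_ ^+ _); lia.
have X_neq0 : X != 0 by rewrite gt_eqF // (lt_le_trans ltr01 X_ge1).
by rewrite mul1r [X * _]mulrC mulrA mulfK.
Qed.
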